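(* Let $V$ be real-valued and absolutely continuous on $[0,\pi]$ and let $a\in(0,\pi)$. There is a constant $C>0$ (depending on $V$ and $a$) such that for all $z\in\mathbb C$ and $n\in\mathbb N$, $$\left|\int_0^\pi F(x,z)\,\mathcal R_{a\pi}(x)\cos(nx)\,dx\right|\le C\frac{e^{\pi|\operatorname{Im}\sqrt z|}}{n^2}\left(1+\frac{1+|z|}{1+\pi|z|^{1/2}}\right).$$
   Context: $\sqrt{\cdot}$ is the principal branch. $\xi(x,z)$ is the solution of $-\xi''+V\xi=z\xi$, $\xi(0,z)=1$, $\xi'(0,z)=0$, and $F(x,z):=\xi(x,z)-\cos(\sqrt z\,x)$. $\mathcal R_{a\pi}(x)=1$ for $x\in[0,a]$ and $\frac{\pi-x}{\pi-a}$ for $x\in(a,\pi]$. *)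

(* classical reals. Complex numbers are encoded as pairs of reals. *)
From Stdlib Require Import Reals Lra List.
Open Scope R_scope.

(* Absolute continuity of V on [lo,hi]: for every eps>0 there is delta>0 such
   that for any finite family of non-overlapping subintervals (c_i,d_i) of
   [lo,hi] (listed in increasing order) with total length < delta, the total
   variation sum |V d_i - V c_i| is < eps. *)
Fixpoint ordered_in (lo hi : R) (l : list (R * R)) : Prop :=
  match l with
  | nil => True
  | (c, d) :: t => lo <= c /\ c <= d /\ d <= hi /\ ordered_in d hi t
  end.

Definition total_length (l : list (R * R)) : R :=
  fold_right (fun cd s => (snd cd - fst cd) + s) 0 l.

Definition total_var (V : R -> R) (l : list (R * R)) : R :=
  fold_right (fun cd s => Rabs (V (snd cd) - V (fst cd)) + s) 0 l.

Definition abs_continuous_on (V : R -> R) (lo hi : R) : Prop :=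
  forall eps, 0 < eps -> exists delta, 0 < delta /\
    forall l, ordered_in lo hi l -> total_length l < delta ->
      total_var V l < eps.

Definition cont_on (f : R -> R) (lo hi : R) : Prop :=
  forall x, lo <= x <= hi ->
    limit1_in f (fun y => lo <= y <= hi) (f x) x.

Definition cmod (p q : R) : R := sqrt (p ^ 2 + q ^ 2).

(* principal square root of z = p + i q : real and imaginary parts
   (branch cut on the negative real axis, Re >= 0, and Im > 0 on the cut) *)
Definition csqrt_re (p q : R) : R := sqrt ((cmod p q + p) / 2).
Definition csqrt_im (p q : R) : R :=
  if Rlt_dec q 0 then - sqrt ((cmod p q - p) / 2)
  else sqrt ((cmod p q - p) / 2).

(* cos(w x) for complex w = al + i be : real and imaginary parts *)
Definition ccos_re (al be x : R) : R := cos (al * x) * cosh (be * x).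
Definition ccos_im (al be x : R) : R := - (sin (al * x) * sinh (be * x)).

Definition Rapi (a x : R) : R :=
  if Rle_dec x a then 1 else (PI - x) / (PI - a).

From Stdlib Require Import Reals Lra Psatz List.
From Coquelicot Require Import Coquelicot.
Open Scope R_scope.

(* Write z = p + i q, m = 1 + |z| and k = 1 + 2 |Im sqrt z| + sup |V|.  For a solution
   y of y'' = s - z y, the derivative of the energy |y'|^2 + m |y|^2 involves z only
   through the coefficients m - Re z and Im z, which are at most (1 + 2 |Im sqrt z|) sqrt m;
   hence the energy grows at rate at most k, up to the forcing s.  Gronwall applied to xi
   (with s = V xi) gives |xi(x)| <= exp (k x / 2).  The deviation F = xi - cos (sqrt z x)
   solves the same equation with zero Cauchy data and the same forcing, so sqrt m |F|,
   |F'| and then F'' = V xi - z F are O(exp (pi |Im sqrt z|) sqrt m).  On [0, a] and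
   [a, pi] the cutoff R_{a pi} is affine, so two integrations by parts against cos (n x)
   gain the factor 1 / n^2 (the boundary terms vanish at 0 since F(0) = F'(0) = 0).
   Finally sqrt (1 + |z|) <= 4 (1 + (1 + |z|) / (1 + pi |z|^(1/2))). *)

Lemma csqrt_spec p q :
  csqrt_re p q * csqrt_re p q - csqrt_im p q * csqrt_im p q = p /\
  2 * csqrt_re p q * csqrt_im p q = q /\
  csqrt_re p q * csqrt_re p q + csqrt_im p q * csqrt_im p q = cmod p q.
Proof.
  unfold csqrt_re, csqrt_im, cmod.
  set (r := sqrt (p ^ 2 + q ^ 2)).
  assert (Hr2 : r * r = p ^ 2 + q ^ 2) by (apply sqrt_sqrt; nra).
  assert (Hr0 : 0 <= r) by apply sqrt_pos.
  assert (E1 : sqrt ((r + p) / 2) * sqrt ((r + p) / 2) = (r + p) / 2) by (apply sqrt_sqrt; nra).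
  assert (E2 : sqrt ((r - p) / 2) * sqrt ((r - p) / 2) = (r - p) / 2) by (apply sqrt_sqrt; nra).
  pose proof (sqrt_pos ((r + p) / 2)) as P1. pose proof (sqrt_pos ((r - p) / 2)) as P2.
  set (A := sqrt ((r + p) / 2)) in *. set (Bb := sqrt ((r - p) / 2)) in *.
  assert (HAB : (A * Bb) * (A * Bb) = q * q / 4).
  { replace ((A * Bb) * (A * Bb)) with ((A * A) * (Bb * Bb)) by ring. rewrite E1, E2. nra. }
  assert (0 <= A * Bb) by nra.
  destruct (Rlt_dec q 0); repeat split; nra.
Qed.

Lemma cmod_shift_sq_le p q :
  (1 + cmod p q - p) * (1 + cmod p q - p) + q * q
  <= (1 + 2 * Rabs (csqrt_im p q)) * (1 + 2 * Rabs (csqrt_im p q)) * (1 + cmod p q).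
Proof.
  destruct (csqrt_spec p q) as [H1 [H2 H3]].
  set (al := csqrt_re p q) in *. set (be := csqrt_im p q) in *.
  rewrite <- H3, <- H1, <- H2.
  assert (Hb : Rabs be * Rabs be = be * be) by (rewrite <- Rabs_mult; apply Rabs_right; nra).
  pose proof (Rabs_pos be). set (t := Rabs be) in *.
  assert (0 <= al * al) by nra. assert (0 <= t * (1 + al * al + t * t)) by (apply Rmult_le_pos; nra).
  rewrite <- Hb. nra.
Qed.

Lemma cauchy_schwarz_cross_le A q m c X1 X2 Y1 Y2 :
  0 < m -> 0 <= c -> A * A + q * q <= c * c * m ->
  2 * (A * (X1 * Y1 + X2 * Y2) + q * (Y1 * X2 - Y2 * X1))
  <= c * (m * (X1 * X1 + X2 * X2) + (Y1 * Y1 + Y2 * Y2)).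
Proof.
  intros Hm Hc H.
  set (S := A * (X1 * Y1 + X2 * Y2) + q * (Y1 * X2 - Y2 * X1)).
  set (X := X1 * X1 + X2 * X2). set (Y := Y1 * Y1 + Y2 * Y2).
  assert (HS : S * S <= (A * A + q * q) * X * Y).
  { unfold S, X, Y.
    assert (0 <= (A * (Y1 * X2 - Y2 * X1) - q * (X1 * Y1 + X2 * Y2)) ^ 2) by apply pow2_ge_0.
    nra. }
  assert (HX : 0 <= X) by (unfold X; nra). assert (HY : 0 <= Y) by (unfold Y; nra).
  assert (H3 : (A * A + q * q) * (X * Y) <= (c * c * m) * (X * Y))
    by (apply Rmult_le_compat_r; nra).
  assert (H4 : 4 * (m * X * Y) <= (m * X + Y) * (m * X + Y))
    by (assert (0 <= (m * X - Y) ^ 2) by apply pow2_ge_0; nra).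
  assert (H5 : (c * c) * (4 * (m * X * Y)) <= (c * c) * ((m * X + Y) * (m * X + Y)))
    by (apply Rmult_le_compat_l; nra).
  assert (HT : 0 <= c * (m * X + Y)) by (apply Rmult_le_pos; nra).
  fold S. apply Rnot_lt_le. intro Hc'.
  assert (0 < (2 * S - c * (m * X + Y)) * (2 * S + c * (m * X + Y)))
    by (apply Rmult_lt_0_compat; lra).
  nra.
Qed.

Lemma two_mul_le_scaled_sq a v b B : Rabs v <= B -> 2 * (a * v * b) <= B * (a * a + b * b).
Proof.
  intros H.
  assert (Ha : Rabs a * Rabs a = a * a) by (rewrite <- Rabs_mult; apply Rabs_right; nra).
  assert (Hb : Rabs b * Rabs b = b * b) by (rewrite <- Rabs_mult; apply Rabs_right; nra).
  assert (0 <= (Rabs a - Rabs b) ^ 2) by apply pow2_ge_0.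
  assert (H1 : a * v * b <= Rabs a * Rabs v * Rabs b) by (rewrite <- !Rabs_mult; apply Rle_abs).
  pose proof (Rabs_pos a). pose proof (Rabs_pos b). pose proof (Rabs_pos v).
  assert (Rabs a * Rabs v * Rabs b <= Rabs a * B * Rabs b).
  { apply Rmult_le_compat_r; auto. apply Rmult_le_compat_l; auto. }
  nra.
Qed.

Lemma Rabs_le_of_sq_le a b : 0 <= b -> a * a <= b * b -> Rabs a <= b.
Proof. intros Hb H. unfold Rabs. destruct Rcase_abs; nra. Qed.

Lemma sqrt_sum_sq_le x y : sqrt (x ^ 2 + y ^ 2) <= Rabs x + Rabs y.
Proof.
  pose proof (Rabs_pos x). pose proof (Rabs_pos y).
  rewrite <- (sqrt_square (Rabs x + Rabs y)) by lra. apply sqrt_le_1_alt.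
  assert (Rabs x * Rabs x = x * x) by (rewrite <- Rabs_mult; apply Rabs_right; nra).
  assert (Rabs y * Rabs y = y * y) by (rewrite <- Rabs_mult; apply Rabs_right; nra).
  nra.
Qed.

Lemma sqrt_1_plus_le r : 0 <= r -> sqrt (1 + r) <= 4 * (1 + (1 + r) / (1 + PI * sqrt r)).
Proof.
  intros Hr. pose proof PI2_3_2. pose proof PI_4.
  set (s := sqrt r). assert (Hs0 : 0 <= s) by apply sqrt_pos.
  assert (Hss : s * s = r) by (apply sqrt_sqrt; lra).
  assert (Hps : 0 < 1 + PI * s) by nra.
  assert (Hsm : sqrt (1 + r) <= 1 + s).
  { apply (Rle_trans _ (Rabs (sqrt (1 + r)))). apply Rle_abs.
    apply Rabs_le_of_sq_le. lra. rewrite sqrt_sqrt by lra. nra. }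
  apply (Rle_trans _ (1 + s)); auto.
  replace (4 * (1 + (1 + r) / (1 + PI * s))) with ((4 * (1 + PI * s) + 4 * (1 + r)) / (1 + PI * s))
    by (field; lra).
  apply Rle_div_r; [lra|]. rewrite <- Hss. nra.
Qed.

(* Replaces each [Derive F x] left by [auto_derive] with a value [l] known from a
   hypothesis [is_derive F x l]. *)
Ltac rewrite_Derive := repeat match goal with |- context [Derive (fun y => ?F y) ?x] =>
  match goal with H : is_derive F x ?l |- _ =>
    replace (Derive (fun y => F y) x) with l by (symmetry; apply is_derive_unique; exact H)
  end end.

(* Composing with [clamp] extends functions given on [0, PI] to all of R, where the
   global continuity and integration lemmas of the libraries apply. *)
Definition clamp (x : R) := Rmax 0 (Rmin PI x).

Lemma clamp_in x : 0 <= clamp x <= PI.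
Proof. unfold clamp, Rmax, Rmin. pose proof PI_RGT_0. repeat destruct Rle_dec; lra. Qed.

Lemma clamp_id x : 0 <= x <= PI -> clamp x = x.
Proof. unfold clamp, Rmax, Rmin. intros. repeat destruct Rle_dec; lra. Qed.

Lemma clamp_lipschitz x y : Rabs (clamp x - clamp y) <= Rabs (x - y).
Proof.
  unfold clamp, Rmax, Rmin. pose proof PI_RGT_0.
  repeat destruct Rle_dec; unfold Rabs; repeat destruct Rcase_abs; lra.
Qed.

Lemma continuity_pt_clamp f x : cont_on f 0 PI -> continuity_pt (fun y => f (clamp y)) x.
Proof.
  intros Hf eps Heps. destruct (Hf (clamp x) (clamp_in x) eps Heps) as [alp [Halp H]].
  exists alp. split; auto. intros y [_ Hy]. simpl in *. unfold R_dist in *.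
  destruct (Req_dec (clamp y) (clamp x)) as [E|E].
  - rewrite E, Rminus_diag, Rabs_R0. lra.
  - apply H. split. apply clamp_in. pose proof (clamp_lipschitz y x). lra.
Qed.

Lemma derivable_pt_lim_clamp f x l : 0 < x < PI ->
  derivable_pt_lim f x l -> derivable_pt_lim (fun y => f (clamp y)) x l.
Proof.
  intros Hx. apply derivable_pt_lim_locally_ext with 0 PI; auto.
  intros z Hz. rewrite clamp_id; lra.
Qed.

Lemma MVT_Rabs_le f df a b M : a <= b -> (forall x, a <= x <= b -> continuity_pt f x) ->
  (forall x, a < x < b -> derivable_pt_lim f x (df x)) ->
  (forall x, a <= x <= b -> Rabs (df x) <= M) -> Rabs (f b - f a) <= M * (b - a).
Proof.
  intros Hab Hc Hd HM.
  destruct (MVT_gen f a b df) as [c [Hc1 Hc2]].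
  - rewrite Rmin_left, Rmax_right by lra. intros; apply is_derive_Reals; auto.
  - rewrite Rmin_left, Rmax_right by lra. auto.
  - rewrite Rmin_left, Rmax_right in Hc1 by lra.
    rewrite Hc2, Rabs_mult, (Rabs_right (b - a)) by lra.
    apply Rmult_le_compat_r; [lra | auto].
Qed.

Lemma MVT_nonincreasing f df a b : a <= b -> (forall x, a <= x <= b -> continuity_pt f x) ->
  (forall x, a < x < b -> derivable_pt_lim f x (df x)) ->
  (forall x, a <= x <= b -> df x <= 0) -> f b <= f a.
Proof.
  intros Hab Hc Hd HM.
  destruct (MVT_gen f a b df) as [c [Hc1 Hc2]].
  - rewrite Rmin_left, Rmax_right by lra. intros; apply is_derive_Reals; auto.
  - rewrite Rmin_left, Rmax_right by lra. auto.
  - rewrite Rmin_left, Rmax_right in Hc1 by lra. assert (df c <= 0) by auto. nra.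
Qed.

Lemma gronwall_exp E dE k b X : 0 <= X -> (forall x, 0 <= x <= X -> continuity_pt E x) ->
  (forall x, 0 < x < X -> derivable_pt_lim E x (dE x)) ->
  (forall x, 0 <= x <= X -> dE x <= k * E x + b * exp (k * x)) ->
  E X <= (E 0 + b * X) * exp (k * X).
Proof.
  intros HX Hc Hd Hb.
  assert (Hinv : forall x, exp (- k * x) * exp (k * x) = 1).
  { intros x. rewrite <- exp_plus. replace (- k * x + k * x) with 0 by ring. apply exp_0. }
  set (f := fun x => exp (- k * x) * E x - b * x).
  assert (Hm : f X <= f 0).
  { apply (MVT_nonincreasing f (fun x => - k * exp (- k * x) * E x + exp (- k * x) * dE x - b)
      0 X HX).
    - intros x Hx. unfold f.
      apply (continuity_pt_minus (fun x => exp (- k * x) * E x) (fun x => b * x)).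
      + apply (continuity_pt_mult (fun x => exp (- k * x)) E); auto.
        apply derivable_continuous_pt. apply derivable_pt_comp.
        apply derivable_pt_scal, derivable_pt_id. apply derivable_pt_exp.
      + apply (continuity_pt_scal id). apply derivable_continuous_pt, derivable_pt_id.
    - intros x Hx. apply is_derive_Reals. pose proof (proj2 (is_derive_Reals _ _ _) (Hd x Hx)).
      unfold f. auto_derive; [eexists; eassumption |].
      rewrite_Derive. ring.
    - intros x Hx. pose proof (Hb x Hx). pose proof (exp_pos (- k * x)).
      assert (exp (- k * x) * dE x <= exp (- k * x) * (k * E x + b * exp (k * x)))
        by (apply Rmult_le_compat_l; lra).
      assert (exp (- k * x) * (k * E x + b * exp (k * x)) = k * exp (- k * x) * E x + b)
        by (transitivity (k * exp (- k * x) * E x + b * (exp (- k * x) * exp (k * x)));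
            [ring | rewrite Hinv; ring]).
      lra. }
  unfold f in Hm. rewrite Rmult_0_r, exp_0 in Hm.
  pose proof (Hinv X). pose proof (exp_pos (k * X)).
  replace (E X) with ((exp (- k * X) * E X) * exp (k * X))
    by (transitivity (E X * (exp (- k * X) * exp (k * X))); [ring | rewrite Hinv; ring]).
  apply Rmult_le_compat_r; lra.
Qed.

Lemma abs_continuous_bounded V lo hi : abs_continuous_on V lo hi ->
  exists B, 0 < B /\ forall x, lo <= x <= hi -> Rabs (V x) <= B.
Proof.
  intros HV. destruct (HV 1 Rlt_0_1) as [dl [Hdl Hl]].
  assert (Hstep : forall x y, lo <= x <= y -> y <= hi -> y - x < dl -> Rabs (V y - V x) <= 1).
  { intros x y Hxy Hy Hd. assert (H := Hl ((x, y) :: nil)). simpl in H.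
    assert (Rabs (V y - V x) + 0 < 1) by (apply H; repeat split; lra). lra. }
  assert (Hind : forall k : nat, forall x, lo <= x <= hi -> x <= lo + INR k * dl / 2 ->
            Rabs (V x - V lo) <= INR k).
  { induction k as [|k IH]; intros x Hx Hk.
    - simpl in *. replace x with lo by lra. rewrite Rminus_diag, Rabs_R0. lra.
    - rewrite S_INR in *. set (y := Rmax lo (x - dl / 2)).
      assert (Hy : lo <= y <= x /\ x - y <= dl / 2 /\ y <= lo + INR k * dl / 2).
      { unfold y, Rmax. pose proof (pos_INR k). destruct Rle_dec; nra. }
      pose proof (IH y ltac:(lra) ltac:(lra)). pose proof (Hstep y x ltac:(lra) ltac:(lra) ltac:(lra)).
      replace (V x - V lo) with ((V x - V y) + (V y - V lo)) by ring.
      eapply Rle_trans. apply Rabs_triang. lra. }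
  destruct (INR_unbounded (2 * Rabs (hi - lo) / dl)) as [k Hk].
  exists (1 + Rabs (V lo) + INR k). split.
  - pose proof (pos_INR k). pose proof (Rabs_pos (V lo)). lra.
  - intros x Hx.
    assert (x <= lo + INR k * dl / 2).
    { assert (2 * Rabs (hi - lo) / dl * dl = 2 * Rabs (hi - lo)) by (field; lra).
      rewrite Rabs_right in * by lra. nra. }
    pose proof (Hind k x Hx ltac:(lra)).
    replace (V x) with ((V x - V lo) + V lo) by ring.
    eapply Rle_trans. apply Rabs_triang. lra.
Qed.

Definition dccos_re (al be x : R) :=
  - (al * sin (al * x) * cosh (be * x)) + be * cos (al * x) * sinh (be * x).
Definition dccos_im (al be x : R) :=
  - (al * cos (al * x) * sinh (be * x) + be * sin (al * x) * cosh (be * x)).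

Lemma derivable_pt_lim_ccos_re al be x : derivable_pt_lim (ccos_re al be) x (dccos_re al be x).
Proof. apply is_derive_Reals. unfold ccos_re, dccos_re, cosh, sinh. auto_derive; auto. field. Qed.

Lemma derivable_pt_lim_ccos_im al be x : derivable_pt_lim (ccos_im al be) x (dccos_im al be x).
Proof. apply is_derive_Reals. unfold ccos_im, dccos_im, cosh, sinh. auto_derive; auto. field. Qed.

Lemma derivable_pt_lim_dccos_re al be x :
  derivable_pt_lim (dccos_re al be) x
    (- ((al * al - be * be) * ccos_re al be x - 2 * al * be * ccos_im al be x)).
Proof.
  apply is_derive_Reals. unfold ccos_re, ccos_im, dccos_re, cosh, sinh. auto_derive; auto. field.
Qed.

Lemma derivable_pt_lim_dccos_im al be x :
  derivable_pt_lim (dccos_im al be) x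
    (- ((al * al - be * be) * ccos_im al be x + 2 * al * be * ccos_re al be x)).
Proof.
  apply is_derive_Reals. unfold ccos_re, ccos_im, dccos_im, cosh, sinh. auto_derive; auto. field.
Qed.

Lemma ccos_re0 al be : ccos_re al be 0 = 1.
Proof. unfold ccos_re, cosh. rewrite !Rmult_0_r, cos_0, Ropp_0, exp_0. field. Qed.

Lemma ccos_im0 al be : ccos_im al be 0 = 0.
Proof. unfold ccos_im. rewrite !Rmult_0_r, sin_0. ring. Qed.

Lemma dccos_re0 al be : dccos_re al be 0 = 0.
Proof. unfold dccos_re, sinh. rewrite !Rmult_0_r, sin_0, Ropp_0, exp_0. field. Qed.

Lemma dccos_im0 al be : dccos_im al be 0 = 0.
Proof. unfold dccos_im, sinh. rewrite !Rmult_0_r, sin_0, Ropp_0, exp_0. field. Qed.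

Definition energy (m : R) (U W U1 W1 : R -> R) (x : R) :=
  U1 x * U1 x + W1 x * W1 x + m * (U x * U x + W x * W x).

Lemma derivable_pt_lim_energy m U W U1 W1 x dU1 dW1 :
  derivable_pt_lim U x (U1 x) -> derivable_pt_lim W x (W1 x) ->
  derivable_pt_lim U1 x dU1 -> derivable_pt_lim W1 x dW1 ->
  derivable_pt_lim (energy m U W U1 W1) x
    (2 * U1 x * dU1 + 2 * W1 x * dW1 + m * (2 * U x * U1 x + 2 * W x * W1 x)).
Proof.
  intros HU HW HU1 HW1. apply is_derive_Reals.
  apply is_derive_Reals in HU, HW, HU1, HW1.
  unfold energy. auto_derive; [repeat split; eexists; eassumption |].
  rewrite_Derive. ring.
Qed.

Lemma continuity_pt_energy m U W U1 W1 x :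
  continuity_pt U x -> continuity_pt W x -> continuity_pt U1 x -> continuity_pt W1 x ->
  continuity_pt (energy m U W U1 W1) x.
Proof.
  intros. unfold energy.
  apply (continuity_pt_plus (fun y => U1 y * U1 y + W1 y * W1 y)
           (fun y => m * (U y * U y + W y * W y))).
  - apply (continuity_pt_plus (fun y => U1 y * U1 y) (fun y => W1 y * W1 y));
      apply continuity_pt_mult; auto.
  - apply (continuity_pt_scal (fun y => U y * U y + W y * W y)).
    apply (continuity_pt_plus (fun y => U y * U y) (fun y => W y * W y));
      apply continuity_pt_mult; auto.
Qed.

Lemma energy_gronwall (U W U1 W1 s1 s2 : R -> R) p q B b :
  (forall x, continuity_pt U x) -> (forall x, continuity_pt W x) ->
  (forall x, continuity_pt U1 x) -> (forall x, continuity_pt W1 x) ->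
  (forall x, 0 < x < PI ->
     derivable_pt_lim U x (U1 x) /\ derivable_pt_lim W x (W1 x) /\
     derivable_pt_lim U1 x (s1 x - (p * U x - q * W x)) /\
     derivable_pt_lim W1 x (s2 x - (p * W x + q * U x))) ->
  (forall x, 0 <= x <= PI ->
     2 * (U1 x * s1 x + W1 x * s2 x)
     <= B * energy (1 + cmod p q) U W U1 W1 x
        + b * exp ((1 + 2 * Rabs (csqrt_im p q) + B) * x)) ->
  forall X, 0 <= X <= PI ->
  energy (1 + cmod p q) U W U1 W1 X
  <= (energy (1 + cmod p q) U W U1 W1 0 + b * X)
     * exp ((1 + 2 * Rabs (csqrt_im p q) + B) * X).
Proof.
  intros HU HW HU1 HW1 Hd Hs X HX.
  set (m := 1 + cmod p q) in *. set (c := 1 + 2 * Rabs (csqrt_im p q)) in *.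
  assert (Hm : 1 <= m) by (unfold m, cmod; pose proof (sqrt_pos (p ^ 2 + q ^ 2)); lra).
  assert (Hc : 1 <= c) by (unfold c; pose proof (Rabs_pos (csqrt_im p q)); lra).
  apply (gronwall_exp _ (fun x => 2 * U1 x * (s1 x - (p * U x - q * W x))
       + 2 * W1 x * (s2 x - (p * W x + q * U x)) + m * (2 * U x * U1 x + 2 * W x * W1 x)));
    try lra.
  - intros. apply continuity_pt_energy; auto.
  - intros x Hx. destruct (Hd x ltac:(lra)) as [H1 [H2 [H3 H4]]].
    apply derivable_pt_lim_energy; auto.
  - intros x Hx. pose proof (Hs x ltac:(lra)).
    pose proof (cauchy_schwarz_cross_le (m - p) q m c (U x) (W x) (U1 x) (W1 x)
                  ltac:(lra) ltac:(lra) (cmod_shift_sq_le p q)).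
    unfold energy in *.
    match goal with |- ?L <= _ =>
      replace L with (2 * (U1 x * s1 x + W1 x * s2 x) + 2 * ((m - p) * (U x * U1 x + W x * W1 x)
                        + q * (U1 x * W x - W1 x * U x))) by ring end.
    replace ((c + B) * (U1 x * U1 x + W1 x * W1 x + m * (U x * U x + W x * W x))) with
      (B * (U1 x * U1 x + W1 x * W1 x + m * (U x * U x + W x * W x))
       + c * (m * (U x * U x + W x * W x) + (U1 x * U1 x + W1 x * W1 x))) by ring.
    lra.
Qed.

Lemma Rapi_alt a x : 0 < a < PI -> Rapi a x = 1 - Rmax 0 (x - a) / (PI - a).
Proof.
  intros Ha. unfold Rapi, Rmax. destruct Rle_dec; destruct Rle_dec; try lra; try (field; lra).
  replace (x - a) with 0 by lra. unfold Rdiv. ring.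
Qed.

Lemma continuity_pt_Rapi a x : 0 < a < PI -> continuity_pt (Rapi a) x.
Proof.
  intros Ha eps Heps.
  exists (eps * (PI - a)). split; [apply Rmult_lt_0_compat; lra |].
  intros y [_ Hy]. simpl in *. unfold R_dist in *. rewrite !Rapi_alt by auto.
  replace (1 - Rmax 0 (y - a) / (PI - a) - (1 - Rmax 0 (x - a) / (PI - a))) with
    ((Rmax 0 (x - a) - Rmax 0 (y - a)) / (PI - a)) by (field; lra).
  unfold Rdiv. rewrite Rabs_mult, (Rabs_right (/ (PI - a)))
    by (apply Rle_ge, Rlt_le, Rinv_0_lt_compat; lra).
  apply (Rmult_lt_reg_r (PI - a)); [lra |]. rewrite Rmult_assoc, Rinv_l by lra.
  assert (Rabs (Rmax 0 (x - a) - Rmax 0 (y - a)) <= Rabs (y - x)).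
  { unfold Rmax. repeat destruct Rle_dec; unfold Rabs; repeat destruct Rcase_abs; lra. }
  lra.
Qed.

Ltac solve_continuity := repeat first
  [ apply continuity_pt_plus | apply continuity_pt_minus | apply continuity_pt_mult
  | apply continuity_pt_opp | apply continuity_pt_const; intros ? ?; reflexivity
  | apply derivable_continuous_pt, derivable_pt_id
  | apply (continuity_pt_comp _ sin); [| apply continuity_sin]
  | apply (continuity_pt_comp _ cos); [| apply continuity_cos]
  | assumption
  | match goal with H : forall x, continuity_pt ?f x |- continuity_pt ?f _ => apply H end ].

Lemma Rabs_mul_cos_le c y M : Rabs c <= M -> Rabs (c * cos y) <= M.
Proof.
  intros H. rewrite Rabs_mult. pose proof (Rabs_pos c).
  assert (Rabs (cos y) <= 1) by (apply Rabs_le, COS_bound).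
  pose proof (Rabs_pos (cos y)). nra.
Qed.

Section Cutoff_integral.

Variables (f f1 f2 : R -> R) (a N M1 M2 : R).
Hypotheses (Ha : 0 < a < PI) (HN : 1 <= N).
Hypotheses (Hfc : forall x, continuity_pt f x) (Hf1c : forall x, continuity_pt f1 x).
Hypothesis Hd : forall x, 0 < x < PI -> derivable_pt_lim f x (f1 x) /\ derivable_pt_lim f1 x (f2 x).
Hypothesis Hb : forall x, 0 <= x <= PI ->
  Rabs (f x) <= M1 /\ Rabs (f1 x) <= M1 /\ Rabs (f2 x) <= M2.

Let g x := f x * Rapi a x * cos (N * x).
Let P := RInt g 0.
Let d := PI - a.

(* Integrating by parts twice, [h1] (resp. [h2]) is a primitive of [g] on [0, a]
   (resp. [a, PI]) up to a term of size [1 / N^2]. *)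
Let h1 x := f x * sin (N * x) / N + f1 x * cos (N * x) / (N * N).
Let h2 x := f x * ((PI - x) / d) * sin (N * x) / N
            + (f1 x * ((PI - x) / d) - f x / d) * cos (N * x) / (N * N).

Lemma cutoff_primitive_derive x : derivable_pt_lim P x (g x).
Proof.
  assert (Hgc : forall y, continuity_pt g y)
    by (intros y; unfold g; solve_continuity; apply continuity_pt_Rapi; auto).
  apply is_derive_Reals, (is_derive_RInt g P 0 x).
  - apply filter_forall. intros y. apply (RInt_correct g 0 y), ex_RInt_continuous.
    intros; apply continuity_pt_filterlim, Hgc.
  - apply continuity_pt_filterlim, Hgc.
Qed.

Lemma cutoff_primitive_continuity x : continuity_pt P x.
Proof. apply derivable_continuous_pt. exists (g x). apply cutoff_primitive_derive. Qed.

Lemma cutoff_bound_nonneg : 0 <= M1 /\ 0 <= M2.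
Proof.
  destruct (Hb 0 ltac:(pose proof PI_RGT_0; lra)) as [H1 [_ H2]].
  pose proof (Rabs_pos (f 0)). pose proof (Rabs_pos (f2 0)). lra.
Qed.

Lemma cutoff_ibp_left : Rabs ((P a - h1 a) - (P 0 - h1 0)) <= M2 / (N * N) * (a - 0).
Proof.
  assert (HN2 : 0 < N * N) by nra.
  apply (MVT_Rabs_le (fun x => P x - h1 x) (fun x => - (f2 x * cos (N * x)) / (N * N))); try lra.
  - intros x Hx. pose proof cutoff_primitive_continuity. unfold h1, Rdiv. solve_continuity.
  - intros x Hx. destruct (Hd x ltac:(lra)) as [H1 H2].
    apply is_derive_Reals in H1, H2.
    assert (Hh : is_derive h1 x (f x * cos (N * x) + f2 x * cos (N * x) / (N * N))).
    { unfold h1. auto_derive; [repeat split; eexists; eassumption |]. rewrite_Derive. field. lra. }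
    apply is_derive_Reals in Hh.
    pose proof (derivable_pt_lim_minus _ _ _ _ _ (cutoff_primitive_derive x) Hh) as H.
    replace (- (f2 x * cos (N * x)) / (N * N)) with (g x - (f x * cos (N * x) + f2 x * cos (N * x) / (N * N))).
    + exact H.
    + unfold g, Rapi. destruct Rle_dec; [field | ]; lra.
  - intros x Hx. destruct (Hb x ltac:(lra)) as [_ [_ H]].
    unfold Rdiv. rewrite Rabs_mult, Rabs_Ropp, (Rabs_right (/ (N * N)))
      by (apply Rle_ge, Rlt_le, Rinv_0_lt_compat; lra).
    apply Rmult_le_compat_r; [apply Rlt_le, Rinv_0_lt_compat; lra |].
    apply Rabs_mul_cos_le; auto.
Qed.

Lemma cutoff_ibp_right :
  Rabs ((P PI - h2 PI) - (P a - h2 a)) <= (M2 + 2 * M1 / d) / (N * N) * (PI - a).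
Proof.
  assert (HN2 : 0 < N * N) by nra. assert (Hdp : 0 < d) by (unfold d; lra).
  apply (MVT_Rabs_le (fun x => P x - h2 x)
           (fun x => - ((f2 x * ((PI - x) / d) - 2 * f1 x / d) * cos (N * x)) / (N * N))); try lra.
  - intros x Hx. pose proof cutoff_primitive_continuity. unfold h2, Rdiv. solve_continuity.
  - intros x Hx. destruct (Hd x ltac:(lra)) as [H1 H2].
    apply is_derive_Reals in H1, H2.
    assert (Hh : is_derive h2 x (f x * ((PI - x) / d) * cos (N * x)
              + (f2 x * ((PI - x) / d) - 2 * f1 x / d) * cos (N * x) / (N * N))).
    { unfold h2. auto_derive; [repeat split; eexists; eassumption |]. rewrite_Derive. field. lra. }
    apply is_derive_Reals in Hh.
    pose proof (derivable_pt_lim_minus _ _ _ _ _ (cutoff_primitive_derive x) Hh) as H.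
    match goal with |- derivable_pt_lim _ _ ?l =>
      replace l with (g x - (f x * ((PI - x) / d) * cos (N * x)
              + (f2 x * ((PI - x) / d) - 2 * f1 x / d) * cos (N * x) / (N * N))) end.
    + exact H.
    + unfold g, Rapi, d. destruct Rle_dec; [lra | field]. lra.
  - intros x Hx. destruct (Hb x ltac:(lra)) as [_ [H1 H2]].
    assert (HR : 0 <= (PI - x) / d <= 1).
    { split; [apply Rdiv_le_0_compat; lra |]. apply (proj1 (Rdiv_le_1 _ _ Hdp)); unfold d; lra. }
    assert (HG : Rabs (f2 x * ((PI - x) / d) - 2 * f1 x / d) <= M2 + 2 * M1 / d).
    { replace (f2 x * ((PI - x) / d) - 2 * f1 x / d)
        with (f2 x * ((PI - x) / d) + - (2 * f1 x / d)) by ring.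
      eapply Rle_trans; [apply Rabs_triang |].
      rewrite Rabs_Ropp, Rabs_mult, (Rabs_right ((PI - x) / d)) by lra.
      unfold Rdiv. rewrite !Rabs_mult, (Rabs_right 2), (Rabs_right (/ d))
        by (try apply Rle_ge, Rlt_le, Rinv_0_lt_compat; lra).
      pose proof (Rabs_pos (f2 x)). assert (0 < / d) by (apply Rinv_0_lt_compat; lra).
      assert (Rabs (f2 x) * ((PI - x) * / d) <= M2) by (unfold Rdiv in HR; nra).
      assert (2 * Rabs (f1 x) * / d <= 2 * M1 * / d) by (apply Rmult_le_compat_r; lra).
      lra. }
    unfold Rdiv. rewrite Rabs_mult, Rabs_Ropp, (Rabs_right (/ (N * N)))
      by (apply Rle_ge, Rlt_le, Rinv_0_lt_compat; lra).
    apply Rmult_le_compat_r; [apply Rlt_le, Rinv_0_lt_compat; lra |].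
    apply Rabs_mul_cos_le; exact HG.
Qed.

Lemma cutoff_integral_le : f 0 = 0 -> f1 0 = 0 ->
  Rabs (RInt (fun x => f x * Rapi a x * cos (N * x)) 0 PI)
  <= (PI * (M2 + 2 * M1 / d) + 2 * M1 / d) / (N * N).
Proof.
  intros Hf0 Hf10.
  assert (HN2 : 0 < N * N) by nra. assert (Hdp : 0 < d) by (unfold d; lra).
  destruct cutoff_bound_nonneg as [HM1 HM2].
  pose proof cutoff_ibp_left as S1. pose proof cutoff_ibp_right as S2.
  assert (E0 : h1 0 = 0) by (unfold h1; rewrite Hf0, Hf10; field; lra).
  assert (Ea : h1 a - h2 a = f a * cos (N * a) / (d * (N * N))) by (unfold h1, h2, d; field; lra).
  assert (Epi : h2 PI = - (f PI * cos (N * PI)) / (d * (N * N))) by (unfold h2, d; field; lra).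
  assert (HP0 : P 0 = 0) by (unfold P; rewrite RInt_point; reflexivity).
  assert (Hend : forall x, 0 <= x <= PI -> Rabs (f x * cos (N * x) / (d * (N * N))) <= M1 / (d * (N * N))).
  { intros x Hx. unfold Rdiv. rewrite Rabs_mult, (Rabs_right (/ (d * (N * N))))
      by (apply Rle_ge, Rlt_le, Rinv_0_lt_compat; nra).
    apply Rmult_le_compat_r; [apply Rlt_le, Rinv_0_lt_compat; nra |].
    apply Rabs_mul_cos_le. apply Hb; auto. }
  pose proof (Hend a ltac:(lra)) as Fa. pose proof (Hend PI ltac:(lra)) as Fpi.
  rewrite <- Rabs_Ropp, <- Rdiv_opp_l in Fpi.
  change (RInt (fun x => f x * Rapi a x * cos (N * x)) 0 PI) with (P PI).
  replace (P PI) with (((P a - h1 a) - (P 0 - h1 0)) + ((P PI - h2 PI) - (P a - h2 a))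
                       + (h1 a - h2 a) - h1 0 + h2 PI) by (rewrite HP0; ring).
  rewrite E0, Ea, Epi. rewrite E0 in S1. rewrite Epi in S2.
  set (A3 := f a * cos (N * a) / (d * (N * N))) in *.
  set (A4 := - (f PI * cos (N * PI)) / (d * (N * N))) in *.
  eapply Rle_trans; [apply Rabs_triang |]. rewrite Rminus_0_r.
  eapply Rle_trans; [apply Rplus_le_compat_r, Rabs_triang |].
  eapply Rle_trans; [apply Rplus_le_compat_r, Rplus_le_compat_r, Rabs_triang |].
  assert (ET : (PI * (M2 + 2 * M1 / d) + 2 * M1 / d) / (N * N) =
    M2 / (N * N) * (a - 0) + (M2 + 2 * M1 / d) / (N * N) * (PI - a)
    + M1 / (d * (N * N)) + M1 / (d * (N * N)) + 2 * a * M1 / (d * (N * N))) by (field; lra).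
  assert (0 <= 2 * a * M1 / (d * (N * N))) by (apply Rdiv_le_0_compat; nra).
  lra.
Qed.

End Cutoff_integral.

(* The bound of [cutoff_integral_le] for [M1 = K0 Q sqrt m] and [M2 = (B + 2 K0) Q sqrt m],
   the bounds on the deviation obtained below, with [K0 = 1 + B PI]. *)
Definition deviation_const (B a : R) :=
  PI * (B + 2 * (1 + B * PI) + 2 * (1 + B * PI) / (PI - a)) + 2 * (1 + B * PI) / (PI - a).

Lemma deviation_const_pos B a : 0 <= B -> 0 < a < PI -> 0 < deviation_const B a.
Proof.
  intros HB Ha. pose proof PI_RGT_0.
  assert (0 < 2 * (1 + B * PI) / (PI - a)) by (apply Rdiv_lt_0_compat; nra).
  unfold deviation_const. nra.
Qed.

Section Deviation.

Variables (V : R -> R) (B p q : R).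
Hypothesis HVb : forall x, 0 <= x <= PI -> Rabs (V x) <= B.
Variables (U W U1 W1 : R -> R).
Hypotheses (HUc : forall x, continuity_pt U x) (HWc : forall x, continuity_pt W x)
  (HU1c : forall x, continuity_pt U1 x) (HW1c : forall x, continuity_pt W1 x).
Hypothesis Hsys : forall x, 0 < x < PI ->
  derivable_pt_lim U x (U1 x) /\ derivable_pt_lim W x (W1 x) /\
  derivable_pt_lim U1 x (V x * U x - (p * U x - q * W x)) /\
  derivable_pt_lim W1 x (V x * W x - (p * W x + q * U x)).
Hypotheses (HU0 : U 0 = 1) (HW0 : W 0 = 0) (HU10 : U1 0 = 0) (HW10 : W1 0 = 0).

Let al := csqrt_re p q.
Let be := csqrt_im p q.
Let m := 1 + cmod p q.
Let k := 1 + 2 * Rabs be + B.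
Let K0 := 1 + B * PI.
Let Q := exp (k * PI / 2).

Let FR x := U x - ccos_re al be x.
Let FI x := W x - ccos_im al be x.
Let FR1 x := U1 x - dccos_re al be x.
Let FI1 x := W1 x - dccos_im al be x.

Fact bound_nonneg : 0 <= B.
Proof. pose proof (HVb 0 ltac:(pose proof PI_RGT_0; lra)). pose proof (Rabs_pos (V 0)). lra. Qed.

Fact m_ge1 : 1 <= m.
Proof. unfold m, cmod. pose proof (sqrt_pos (p ^ 2 + q ^ 2)). lra. Qed.

Fact k_nonneg : 0 <= k.
Proof. unfold k. pose proof (Rabs_pos be). pose proof bound_nonneg. lra. Qed.

Lemma exp_k_le x : 0 <= x <= PI -> exp (k * x) <= Q * Q.
Proof.
  intros Hx. unfold Q. rewrite <- exp_plus. replace (k * PI / 2 + k * PI / 2) with (k * PI) by field.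
  pose proof k_nonneg. destruct (Req_dec (k * x) (k * PI)) as [E|E].
  - rewrite E. lra.
  - apply Rlt_le, exp_increasing. nra.
Qed.

Lemma solution_sq_le x : 0 <= x <= PI -> U x * U x + W x * W x <= exp (k * x).
Proof.
  intros Hx. pose proof m_ge1. pose proof bound_nonneg.
  assert (HE : energy m U W U1 W1 x <= m * exp (k * x)).
  { replace (m * exp (k * x)) with ((energy m U W U1 W1 0 + 0 * x) * exp (k * x))
      by (unfold energy; rewrite HU0, HW0, HU10, HW10; ring).
    apply (energy_gronwall U W U1 W1 (fun x => V x * U x) (fun x => V x * W x) p q B 0); auto.
    intros y Hy.
    pose proof (two_mul_le_scaled_sq (U1 y) (V y) (U y) B (HVb y Hy)).
    pose proof (two_mul_le_scaled_sq (W1 y) (V y) (W y) B (HVb y Hy)).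
    assert (0 <= U y * U y + W y * W y) by nra.
    assert (B * (U y * U y + W y * W y) <= B * (m * (U y * U y + W y * W y)))
      by (apply Rmult_le_compat_l; nra).
    change (1 + cmod p q) with m. unfold energy. lra. }
  unfold energy in HE. apply (Rmult_le_reg_l m); nra.
Qed.

Lemma deviation_continuity x :
  continuity_pt FR x /\ continuity_pt FI x /\ continuity_pt FR1 x /\ continuity_pt FI1 x.
Proof.
  assert (Hd : forall (f : R -> R) df, (forall y, derivable_pt_lim f y (df y)) -> continuity_pt f x)
    by (intros f df Hf; apply derivable_continuous_pt; exists (df x); apply Hf).
  repeat split; apply continuity_pt_minus; auto; eapply Hd.
  - apply derivable_pt_lim_ccos_re.
  - apply derivable_pt_lim_ccos_im.
  - apply derivable_pt_lim_dccos_re.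
  - apply derivable_pt_lim_dccos_im.
Qed.

Lemma deviation_system x : 0 < x < PI ->
  derivable_pt_lim FR x (FR1 x) /\ derivable_pt_lim FI x (FI1 x) /\
  derivable_pt_lim FR1 x (V x * U x - (p * FR x - q * FI x)) /\
  derivable_pt_lim FI1 x (V x * W x - (p * FI x + q * FR x)).
Proof.
  intros Hx. destruct (Hsys x Hx) as [H1 [H2 [H3 H4]]].
  destruct (csqrt_spec p q) as [Hp [Hq _]]. fold al be in Hp, Hq.
  pose proof (derivable_pt_lim_dccos_re al be x) as Hr.
  pose proof (derivable_pt_lim_dccos_im al be x) as Hi.
  rewrite Hp, Hq in Hr, Hi.
  repeat split.
  - exact (derivable_pt_lim_minus _ _ _ _ _ H1 (derivable_pt_lim_ccos_re al be x)).
  - exact (derivable_pt_lim_minus _ _ _ _ _ H2 (derivable_pt_lim_ccos_im al be x)).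
  - replace (V x * U x - (p * FR x - q * FI x))
      with (V x * U x - (p * U x - q * W x) - - (p * ccos_re al be x - q * ccos_im al be x))
      by (unfold FR, FI; ring).
    exact (derivable_pt_lim_minus _ _ _ _ _ H3 Hr).
  - replace (V x * W x - (p * FI x + q * FR x))
      with (V x * W x - (p * W x + q * U x) - - (p * ccos_im al be x + q * ccos_re al be x))
      by (unfold FR, FI; ring).
    exact (derivable_pt_lim_minus _ _ _ _ _ H4 Hi).
Qed.

Lemma deviation_energy_le x : 0 <= x <= PI -> energy m FR FI FR1 FI1 x <= (K0 * Q) * (K0 * Q).
Proof.
  intros Hx. pose proof m_ge1. pose proof bound_nonneg. pose proof PI_RGT_0.
  assert (HE : energy m FR FI FR1 FI1 x <= (0 + B * x) * exp (k * x)).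
  { replace 0 with (energy m FR FI FR1 FI1 0) at 1
      by (unfold energy, FR, FI, FR1, FI1;
          rewrite HU0, HW0, HU10, HW10, ccos_re0, ccos_im0, dccos_re0, dccos_im0; ring).
    apply (energy_gronwall FR FI FR1 FI1 (fun x => V x * U x) (fun x => V x * W x) p q B B);
      try apply deviation_continuity; auto using deviation_system.
    intros y Hy.
    pose proof (two_mul_le_scaled_sq (FR1 y) (V y) (U y) B (HVb y Hy)).
    pose proof (two_mul_le_scaled_sq (FI1 y) (V y) (W y) B (HVb y Hy)).
    pose proof (solution_sq_le y Hy).
    assert (0 <= B * (m * (FR y * FR y + FI y * FI y))) by (apply Rmult_le_pos; nra).
    assert (B * (U y * U y + W y * W y) <= B * exp (k * y)) by (apply Rmult_le_compat_l; lra).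
    change (1 + cmod p q) with m. change (1 + 2 * Rabs (csqrt_im p q) + B) with k.
    unfold energy. lra. }
  pose proof (exp_k_le x Hx). pose proof (exp_pos (k * x)).
  assert (B * x <= B * PI) by nra.
  assert (B * x * exp (k * x) <= B * PI * (Q * Q)) by (apply Rmult_le_compat; nra).
  unfold K0. nra.
Qed.

Lemma deviation_pointwise_le x : 0 <= x <= PI ->
  Rabs (U x) <= Q /\ Rabs (W x) <= Q /\
  sqrt m * Rabs (FR x) <= K0 * Q /\ sqrt m * Rabs (FI x) <= K0 * Q /\
  Rabs (FR1 x) <= K0 * Q /\ Rabs (FI1 x) <= K0 * Q.
Proof.
  intros Hx. pose proof m_ge1. pose proof bound_nonneg. pose proof PI_RGT_0.
  pose proof (solution_sq_le x Hx). pose proof (exp_k_le x Hx).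
  pose proof (deviation_energy_le x Hx) as HE. unfold energy in HE.
  assert (Hsm : sqrt m * sqrt m = m) by (apply sqrt_sqrt; lra).
  assert (HQ : 0 < Q) by apply exp_pos.
  assert (HK0 : 1 <= K0) by (unfold K0; nra).
  assert (HKQ : 0 <= K0 * Q) by (apply Rmult_le_pos; lra).
  assert (Hsq : forall y, 0 <= y * y) by (intros; nra).
  pose proof (Hsq (FR1 x)). pose proof (Hsq (FI1 x)). pose proof (Hsq (FR x)). pose proof (Hsq (FI x)).
  pose proof (Hsq (U x)). pose proof (Hsq (W x)).
  assert (Hm : forall y, m * (y * y) = (sqrt m * y) * (sqrt m * y))
    by (intros; transitivity ((sqrt m * sqrt m) * (y * y)); [rewrite Hsm | ]; ring).
  assert (Hmabs : forall y, sqrt m * Rabs y = Rabs (sqrt m * y))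
    by (intros; rewrite Rabs_mult, (Rabs_right (sqrt m)) by (apply Rle_ge, sqrt_pos); reflexivity).
  rewrite Rmult_plus_distr_l, !Hm in HE. rewrite !Hmabs.
  pose proof (Hsq (sqrt m * FR x)). pose proof (Hsq (sqrt m * FI x)).
  repeat split; apply Rabs_le_of_sq_le; lra.
Qed.

Lemma deviation_forcing_le x X Y Z : 0 <= x <= PI ->
  Rabs X <= Q -> sqrt m * Rabs Y <= K0 * Q -> sqrt m * Rabs Z <= K0 * Q ->
  Rabs (V x * X - (p * Y - q * Z)) <= (B + 2 * K0) * Q * sqrt m /\
  Rabs (V x * X - (p * Y + q * Z)) <= (B + 2 * K0) * Q * sqrt m.
Proof.
  intros Hx HX HY HZ. pose proof m_ge1. pose proof bound_nonneg.
  assert (Hsm : sqrt m * sqrt m = m) by (apply sqrt_sqrt; lra).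
  assert (Hsm1 : 1 <= sqrt m) by (rewrite <- sqrt_1; apply sqrt_le_1_alt; lra).
  assert (Hpq : Rabs p <= sqrt m * sqrt m /\ Rabs q <= sqrt m * sqrt m).
  { rewrite Hsm. unfold m. assert (0 <= cmod p q) by apply sqrt_pos.
    assert (Hc : cmod p q * cmod p q = p ^ 2 + q ^ 2) by (apply sqrt_sqrt; nra).
    split; apply Rabs_le_of_sq_le; nra. }
  assert (Hcoef : forall c Y, Rabs c <= sqrt m * sqrt m -> sqrt m * Rabs Y <= K0 * Q ->
            Rabs (c * Y) <= sqrt m * (K0 * Q)).
  { intros c Y' Hc HY'. rewrite Rabs_mult. pose proof (Rabs_pos Y').
    apply Rle_trans with (sqrt m * sqrt m * Rabs Y'); [apply Rmult_le_compat_r; auto |].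
    rewrite Rmult_assoc. apply Rmult_le_compat_l; lra. }
  pose proof (Hcoef p Y (proj1 Hpq) HY). pose proof (Hcoef q Z (proj2 Hpq) HZ).
  assert (Rabs (V x * X) <= B * Q)
    by (rewrite Rabs_mult; apply Rmult_le_compat; auto using Rabs_pos).
  assert (0 <= Q) by (left; apply exp_pos).
  assert (0 <= B * Q) by (apply Rmult_le_pos; lra).
  assert (B * Q <= B * Q * sqrt m) by nra.
  assert (Htri : forall u v w, Rabs (u - (v - w)) <= Rabs u + Rabs v + Rabs w /\
                               Rabs (u - (v + w)) <= Rabs u + Rabs v + Rabs w)
    by (intros; unfold Rabs; repeat destruct Rcase_abs; split; lra).
  destruct (Htri (V x * X) (p * Y) (q * Z)). split; lra.
Qed.

Variables (a N : R).
Hypotheses (Ha : 0 < a < PI) (HN : 1 <= N).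

Lemma deviation_integrals_le :
  Rabs (RInt (fun x => FR x * Rapi a x * cos (N * x)) 0 PI)
    <= deviation_const B a * Q * sqrt m / (N * N) /\
  Rabs (RInt (fun x => FI x * Rapi a x * cos (N * x)) 0 PI)
    <= deviation_const B a * Q * sqrt m / (N * N).
Proof.
  pose proof m_ge1. pose proof bound_nonneg.
  assert (Hsm1 : 1 <= sqrt m) by (rewrite <- sqrt_1; apply sqrt_le_1_alt; lra).
  assert (HQ : 0 < Q) by apply exp_pos.
  assert (E : (PI * ((B + 2 * K0) * Q * sqrt m + 2 * (K0 * Q * sqrt m) / (PI - a))
               + 2 * (K0 * Q * sqrt m) / (PI - a)) / (N * N)
              = deviation_const B a * Q * sqrt m / (N * N))
    by (unfold deviation_const, K0; field; split; lra).
  assert (HM1 : forall y, Rabs y <= sqrt m * Rabs y) by (intros y; pose proof (Rabs_pos y); nra).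
  assert (0 <= K0 * Q) by (apply Rmult_le_pos; unfold K0; nra).
  assert (HKQ : K0 * Q <= K0 * Q * sqrt m) by nra.
  rewrite <- E. split.
  - apply (cutoff_integral_le FR FR1 (fun x => V x * U x - (p * FR x - q * FI x))); auto.
    + intros y; apply deviation_continuity.
    + intros y; apply deviation_continuity.
    + intros x Hx. destruct (deviation_system x Hx) as [Hd1 [_ [Hd2 _]]]. auto.
    + intros x Hx. destruct (deviation_pointwise_le x Hx) as [HU [_ [HFR [HFI [HFR1 _]]]]].
      repeat split; [pose proof (HM1 (FR x)); lra | lra |].
      apply (deviation_forcing_le x (U x) (FR x) (FI x)); auto.
    + unfold FR. rewrite HU0, ccos_re0. ring.
    + unfold FR1. rewrite HU10, dccos_re0. ring.
  - apply (cutoff_integral_le FI FI1 (fun x => V x * W x - (p * FI x + q * FR x))); auto.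
    + intros y; apply deviation_continuity.
    + intros y; apply deviation_continuity.
    + intros x Hx. destruct (deviation_system x Hx) as [_ [Hd1 [_ Hd2]]]. auto.
    + intros x Hx. destruct (deviation_pointwise_le x Hx) as [_ [HW [HFR [HFI [_ HFI1]]]]].
      repeat split; [pose proof (HM1 (FI x)); lra | lra |].
      apply (deviation_forcing_le x (W x) (FI x) (FR x)); auto.
    + unfold FI. rewrite HW0, ccos_im0. ring.
    + unfold FI1. rewrite HW10, dccos_im0. ring.
Qed.

Lemma deviation_modulus_le :
  sqrt (RInt (fun x => FR x * Rapi a x * cos (N * x)) 0 PI ^ 2
        + RInt (fun x => FI x * Rapi a x * cos (N * x)) 0 PI ^ 2)
  <= 8 * deviation_const B a * exp ((1 + B) * PI / 2) * exp (PI * Rabs be) / N ^ 2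
     * (1 + (1 + cmod p q) / (1 + PI * sqrt (cmod p q))).
Proof.
  destruct deviation_integrals_le as [Hre Him].
  assert (Hsm : sqrt m <= 4 * (1 + (1 + cmod p q) / (1 + PI * sqrt (cmod p q))))
    by exact (sqrt_1_plus_le (cmod p q) (sqrt_pos _)).
  pose proof (sqrt_sum_sq_le (RInt (fun x => FR x * Rapi a x * cos (N * x)) 0 PI)
                             (RInt (fun x => FI x * Rapi a x * cos (N * x)) 0 PI)).
  pose proof (deviation_const_pos B a bound_nonneg Ha).
  set (G := 1 + (1 + cmod p q) / (1 + PI * sqrt (cmod p q))) in *.
  set (Z := deviation_const B a * Q / (N * N)).
  assert (HZ : 0 < Z) by (apply Rdiv_lt_0_compat; [apply Rmult_lt_0_compat, exp_pos | nra]; auto).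
  replace (deviation_const B a * Q * sqrt m / (N * N)) with (sqrt m * Z) in Hre, Him
    by (unfold Z; field; lra).
  assert (HQ : exp ((1 + B) * PI / 2) * exp (PI * Rabs be) = Q)
    by (unfold Q, k; rewrite <- exp_plus; f_equal; field).
  replace (8 * deviation_const B a * exp ((1 + B) * PI / 2) * exp (PI * Rabs be) / N ^ 2 * G)
    with (8 * G * Z) by (unfold Z; rewrite <- HQ; field; lra).
  assert (sqrt m * Z <= 4 * G * Z) by (apply Rmult_le_compat_r; lra).
  lra.
Qed.

End Deviation.

Lemma RiemannInt_eq_RInt f g lo hi (pr : Riemann_integrable f lo hi) :
  lo <= hi -> (forall x, lo <= x <= hi -> f x = g x) -> RiemannInt pr = RInt g lo hi.
Proof.
  intros Hlh Hfg. rewrite <- RInt_Reals. apply RInt_ext.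
  intros x Hx. rewrite Rmin_left, Rmax_right in Hx by lra. apply Hfg. lra.
Qed.

Theorem lemmaA6 (V : R -> R) (a : R)
  (HV : abs_continuous_on V 0 PI) (Ha : 0 < a < PI) :
  exists C : R, 0 < C /\
  forall (p q : R) (n : nat), (1 <= n)%nat ->
  forall (u w u' w' : R -> R),
    cont_on u 0 PI -> cont_on w 0 PI -> cont_on u' 0 PI -> cont_on w' 0 PI ->
    (forall x, 0 < x < PI ->
       derivable_pt_lim u x (u' x) /\ derivable_pt_lim w x (w' x) /\
       derivable_pt_lim u' x (V x * u x - (p * u x - q * w x)) /\
       derivable_pt_lim w' x (V x * w x - (p * w x + q * u x))) ->
    u 0 = 1 -> w 0 = 0 -> u' 0 = 0 -> w' 0 = 0 ->
  forall (pr_re : Riemann_integrable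
            (fun x => (u x - ccos_re (csqrt_re p q) (csqrt_im p q) x)
                      * Rapi a x * cos (INR n * x)) 0 PI)
         (pr_im : Riemann_integrable
            (fun x => (w x - ccos_im (csqrt_re p q) (csqrt_im p q) x)
                      * Rapi a x * cos (INR n * x)) 0 PI),
    sqrt (RiemannInt pr_re ^ 2 + RiemannInt pr_im ^ 2)
    <= C * exp (PI * Rabs (csqrt_im p q)) / (INR n ^ 2)
         * (1 + (1 + cmod p q) / (1 + PI * sqrt (cmod p q))).
Proof.
  destruct (abs_continuous_bounded V 0 PI HV) as [B [HB HVb]].
  exists (8 * deviation_const B a * exp ((1 + B) * PI / 2)). split.
  { pose proof (deviation_const_pos B a ltac:(lra) Ha). pose proof (exp_pos ((1 + B) * PI / 2)). nra. }
  intros p q n Hn u w u' w' Hu Hw Hu' Hw' Hder Hu0 Hw0 Hu'0 Hw'0 pr_re pr_im.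
  assert (HN : 1 <= INR n) by (apply (le_INR 1 n) in Hn; simpl in Hn; lra).
  erewrite !RiemannInt_eq_RInt.
  - apply (deviation_modulus_le V B p q HVb (fun x => u (clamp x)) (fun x => w (clamp x))
             (fun x => u' (clamp x)) (fun x => w' (clamp x)));
      try (intros; apply continuity_pt_clamp); rewrite ?clamp_id; auto; try lra.
    intros x Hx. destruct (Hder x Hx) as [H1 [H2 [H3 H4]]]. rewrite !clamp_id by lra.
    repeat split; apply derivable_pt_lim_clamp; auto.
  all: pose proof PI_RGT_0; try lra; intros x Hx; cbv beta; rewrite clamp_id by lra; reflexivity.
Qed.
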